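(* Let $(\mu_i,\mathcal{S}_i,L_i,\pi_i)_{i=1}^n$ be irreducible, reversible continuous-time finite Markov chains, $p_1,\dots,p_n>0$ with $\sum_ip_i\le1$, and $(\mu,\mathcal{S},L,\pi)$ the product chain. With $\varrho_l,\rho_l,\psi_l,\varphi_l,j(c),\tilde j(c)$ as defined in the context, \[\varrho_{j(c)}\le\rho_{\tilde j(c)}\le\varrho_{j(e^c-1)}\quad\text{for all }c>0,\] with the conventions $\min\emptyset=\infty$ (and the corresponding eigenvalue $=\infty$).
   Context: Product chain: $\mathcal{S}=\prod_{i=1}^n\mathcal{S}_i$, $\mu=\prod_i\mu_i$, $\pi=\prod_i\pi_i$, $L=\sum_{i=1}^np_iI_1\otimes\cdots\otimes I_{i-1}\otimes L_i\otimes I_{i+1}\otimes\cdots\otimes I_n$. Let $0=\lambda_{i,0}\le\lambda_{i,1}\le\dots\le\lambda_{i,|\mathcal{S}_i|-1}$ be the eigenvalues of $-L_i$ with $L^2(\pi_i)$-orthonormal right eigenvectors $\phi_{i,0}=\mathbf1,\phi_{i,1},\dots$. Let $\Gamma=\{J=(j_1,\dots,j_n):0\le j_i<|\mathcal{S}_i|\}$, and for $J\in\Gamma$ set $\lambda_J=\sum_ip_i\lambda_{i,j_i}$, $\phi_J=\prod_i\phi_{i,j_i}$ (tensor product), and $\mu(\phi_J)=\prod_i\mu_i(\phi_{i,j_i})$ where $\mu_i(\phi)=\sum_x\mu_i(x)\phi(x)$. Enumerate $\{\lambda_J:J\in\Gamma,J\ne\mathbf0\}$ as $\varrho_1\le\varrho_2\le\cdots$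 with $\psi_l$ the corresponding $\mu(\phi_J)$; enumerate $\{p_i\lambda_{i,j}:1\le j<|\mathcal{S}_i|,1\le i\le n\}$ as $\rho_1\le\rho_2\le\cdots$ with $\varphi_l$ the corresponding $\mu_i(\phi_{i,j})$. For $c>0$: $j(c)=\min\{j\ge1:\sum_{l=1}^j\psi_l^2>c\}$ and $\tilde j(c)=\min\{j\ge1:\sum_{l=1}^j\varphi_l^2>c\}$. *)

From Stdlib Require Import Reals Lra.
Open Scope R_scope.

Fixpoint sumR (f : nat -> R) (k : nat) : R :=
  match k with O => 0 | S k' => sumR f k' + f k' end.

Fixpoint prodR (f : nat -> R) (k : nat) : R :=
  match k with O => 1 | S k' => prodR f k' * f k' end.

Fixpoint psum (g : nat -> R) (j : nat) : R :=
  match j with O => 0 | S j' => psum g j' + g (S j') end.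

Fixpoint first_from (P : nat -> bool) (k fuel : nat) : option nat :=
  match fuel with
  | O => None
  | S f => if P k then Some k else first_from P (S k) f
  end.

(* jmin g c N = min { j in 1..N : g 1 + ... + g j > c }, None if empty
   (beyond N there are no further terms, so the sums are constant). *)
Definition jmin (g : nat -> R) (c : R) (N : nat) : option nat :=
  first_from (fun j => if Rlt_dec c (psum g j) then true else false) 1 N.

(* The eigenvalue at index jmin, with the convention "= infinity" (None)
   when the minimum is over the empty set. *)
Definition eig_at (ev : nat -> R) (j : option nat) : option R :=
  match j with Some l => Some (ev l) | None => None end.

(* order on R ∪ {+infinity} (None = +infinity) *)
Definition le_ext (a b : option R) : Prop :=
  match a, b with
  | _, None => True
  | None, Some _ => False
  | Some x, Some y => x <= y
  end.

(* ---------- Finite continuous-time Markov chains ----------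
   A chain with state space {0,...,m-1} is given by its generator
   L : nat -> nat -> R (only entries x,y < m matter). *)

Definition is_generator (m : nat) (L : nat -> nat -> R) : Prop :=
  (forall x y, (x < m)%nat -> (y < m)%nat -> x <> y -> 0 <= L x y) /\
  (forall x, (x < m)%nat -> sumR (fun y => L x y) m = 0).

Definition is_distribution (m : nat) (q : nat -> R) : Prop :=
  (forall x, (x < m)%nat -> 0 <= q x) /\ sumR q m = 1.

Inductive reach (m : nat) (L : nat -> nat -> R) : nat -> nat -> Prop :=
  | reach_refl x : reach m L x x
  | reach_step x y z : (y < m)%nat -> L x y > 0 -> reach m L y z -> reach m L x z.

Definition irreducible (m : nat) (L : nat -> nat -> R) : Prop :=
  forall x y, (x < m)%nat -> (y < m)%nat -> reach m L x y.

Definition reversible (m : nat) (L : nat -> nat -> R) (pi : nat -> R) : Prop :=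
  forall x y, (x < m)%nat -> (y < m)%nat -> pi x * L x y = pi y * L y x.

Definition eigen_decomp (m : nat) (L : nat -> nat -> R) (pi : nat -> R)
    (lam : nat -> R) (phi : nat -> nat -> R) : Prop :=
  lam 0%nat = 0 /\
  (forall j k, (j <= k)%nat -> (k < m)%nat -> lam j <= lam k) /\
  (forall x, (x < m)%nat -> phi 0%nat x = 1) /\
  (forall j x, (j < m)%nat -> (x < m)%nat ->
      sumR (fun y => L x y * phi j y) m = - (lam j * phi j x)) /\
  (forall j k, (j < m)%nat -> (k < m)%nat ->
      sumR (fun x => pi x * phi j x * phi k x) m = if Nat.eq_dec j k then 1 else 0).

Definition meas (m : nat) (mu : nat -> R) (f : nat -> R) : R :=
  sumR (fun x => mu x * f x) m.

(* ---------- Product chain spectral data ----------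
   Chain i (i < n) has state space size msz i; a multi-index J : nat -> nat
   is in Gamma iff J i < msz i for all i < n (values at i >= n are irrelevant). *)

Definition in_Gamma (n : nat) (msz : nat -> nat) (J : nat -> nat) : Prop :=
  forall i, (i < n)%nat -> (J i < msz i)%nat.

Definition nonzero_idx (n : nat) (J : nat -> nat) : Prop :=
  exists i, (i < n)%nat /\ J i <> 0%nat.

Definition same_idx (n : nat) (J J' : nat -> nat) : Prop :=
  forall i, (i < n)%nat -> J i = J' i.

Definition lamJ (n : nat) (p : nat -> R) (lam : nat -> nat -> R) (J : nat -> nat) : R :=
  sumR (fun i => p i * lam i (J i)) n.

Definition muphiJ (n : nat) (msz : nat -> nat) (mu : nat -> nat -> R)
    (phi : nat -> nat -> nat -> R) (J : nat -> nat) : R :=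
  prodR (fun i => meas (msz i) (mu i) (phi i (J i))) n.

Definition enum_prod (n : nat) (msz : nat -> nat) (p : nat -> R)
    (lam : nat -> nat -> R) (N : nat) (e : nat -> nat -> nat) : Prop :=
  (forall l, (1 <= l <= N)%nat -> in_Gamma n msz (e l) /\ nonzero_idx n (e l)) /\
  (forall l l', (1 <= l <= N)%nat -> (1 <= l' <= N)%nat ->
      same_idx n (e l) (e l') -> l = l') /\
  (forall J, in_Gamma n msz J -> nonzero_idx n J ->
      exists l, (1 <= l <= N)%nat /\ same_idx n (e l) J) /\
  (forall l l', (1 <= l <= l')%nat -> (l' <= N)%nat ->
      lamJ n p lam (e l) <= lamJ n p lam (e l')).

Definition enum_single (n : nat) (msz : nat -> nat) (p : nat -> R)
    (lam : nat -> nat -> R) (K : nat) (f : nat -> nat * nat) : Prop :=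
  (forall l, (1 <= l <= K)%nat ->
      (fst (f l) < n)%nat /\ (1 <= snd (f l) < msz (fst (f l)))%nat) /\
  (forall l l', (1 <= l <= K)%nat -> (1 <= l' <= K)%nat -> f l = f l' -> l = l') /\
  (forall i j, (i < n)%nat -> (1 <= j < msz i)%nat ->
      exists l, (1 <= l <= K)%nat /\ f l = (i, j)) /\
  (forall l l', (1 <= l <= l')%nat -> (l' <= K)%nat ->
      p (fst (f l)) * lam (fst (f l)) (snd (f l)) <=
      p (fst (f l')) * lam (fst (f l')) (snd (f l'))).

From Stdlib Require Import Reals Lra Lia List.
Import ListNotations.
Open Scope R_scope.

(* Both inequalities compare the truncated spectral masses
   [M(lm) = sum of psi_l^2 over varrho_l <= lm] and
   [m(lm) = sum of varphi_l^2 over rho_l <= lm].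
   The single-coordinate multi-indices embed the one-chain spectrum into the
   product spectrum with the same eigenvalues and weights (mu_i(phi_{i,0}) = 1),
   so m(lm) <= M(lm).  Conversely, lambda_J <= lm forces p_i lambda_{i,J_i} <= lm
   for every i, so 1 + M(lm) <= prod_i (1 + s_i) <= exp (sum_i s_i) <= exp m(lm),
   where s_i is the part of m(lm) coming from chain i.  Since j(c) is the first
   index at which the mass exceeds c, these mass bounds turn into the eigenvalue
   bounds. *)

(** * Finite sums and products *)

Lemma sumR_ext f g m : (forall x, (x < m)%nat -> f x = g x) -> sumR f m = sumR g m.
Proof.
  induction m; simpl; intros H; auto.
  rewrite IHm by (intros; apply H; lia). rewrite H by lia. reflexivity.
Qed.

Lemma prodR_ext f g m : (forall x, (x < m)%nat -> f x = g x) -> prodR f m = prodR g m.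
Proof.
  induction m; simpl; intros H; auto.
  rewrite IHm by (intros; apply H; lia). rewrite H by lia. reflexivity.
Qed.

Lemma sumR_nonneg f m : (forall x, (x < m)%nat -> 0 <= f x) -> 0 <= sumR f m.
Proof.
  induction m; simpl; intros H; [lra|].
  pose proof (H m ltac:(lia)). pose proof (IHm ltac:(intros; apply H; lia)). lra.
Qed.

Lemma prodR_nonneg f m : (forall x, (x < m)%nat -> 0 <= f x) -> 0 <= prodR f m.
Proof.
  induction m; simpl; intros H; [lra|].
  apply Rmult_le_pos; [apply IHm; intros; apply H; lia | apply H; lia].
Qed.

Lemma sumR_ge_term g m i :
  (forall x, (x < m)%nat -> 0 <= g x) -> (i < m)%nat -> g i <= sumR g m.
Proof.
  induction m; simpl; intros H Hi; [lia|].
  pose proof (H m ltac:(lia)).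
  destruct (Nat.eq_dec i m) as [->|].
  - pose proof (sumR_nonneg g m ltac:(intros; apply H; lia)). lra.
  - pose proof (IHm ltac:(intros; apply H; lia) ltac:(lia)). lra.
Qed.

Lemma sumR_single g m i0 :
  (i0 < m)%nat -> (forall i, (i < m)%nat -> i <> i0 -> g i = 0) -> sumR g m = g i0.
Proof.
  induction m; simpl; intros Hi H; [lia|].
  destruct (Nat.eq_dec i0 m) as [->|].
  - rewrite (sumR_ext g (fun _ => 0)) by (intros; apply H; lia).
    enough (sumR (fun _ => 0) m = 0) by lra.
    clear; induction m; simpl; lra.
  - rewrite IHm by (intros; try apply H; lia). rewrite (H m) by lia. lra.
Qed.

Lemma prodR_single g m i0 :
  (i0 < m)%nat -> (forall i, (i < m)%nat -> i <> i0 -> g i = 1) -> prodR g m = g i0.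
Proof.
  induction m; simpl; intros Hi H; [lia|].
  destruct (Nat.eq_dec i0 m) as [->|].
  - rewrite (prodR_ext g (fun _ => 1)) by (intros; apply H; lia).
    enough (Hone : prodR (fun _ => 1) m = 1) by (rewrite Hone; lra).
    clear; induction m; simpl; lra.
  - rewrite IHm by (intros; try apply H; lia). rewrite (H m) by lia. lra.
Qed.

Lemma prodR_sq g m : prodR g m ^ 2 = prodR (fun i => g i ^ 2) m.
Proof. induction m; cbn [prodR]; [lra|]. rewrite <- IHm. ring. Qed.

Lemma sumR_shift g m : sumR g (S m) = g 0%nat + sumR (fun j => g (S j)) m.
Proof.
  induction m; [simpl; lra|].
  change (sumR g (S (S m))) with (sumR g (S m) + g (S m)). rewrite IHm. simpl. lra.
Qed.

Lemma sumR_scal C g m : sumR (fun x => C * g x) m = C * sumR g m.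
Proof. induction m; simpl; [lra|]. rewrite IHm. lra. Qed.

Lemma sumR_split v b s : (s < b)%nat ->
  sumR v b = sumR (fun x => if Nat.eq_dec x s then 0 else v x) b + v s.
Proof.
  induction b; intros Hs; [lia|]. simpl.
  destruct (Nat.eq_dec s b) as [->|].
  - rewrite (sumR_ext (fun x => if Nat.eq_dec x b then 0 else v x) v b).
    + destruct (Nat.eq_dec b b); [lra | congruence].
    + intros x Hx. destruct (Nat.eq_dec x b); [lia | reflexivity].
  - rewrite IHb by lia. destruct (Nat.eq_dec b s); [lia|]. lra.
Qed.

Lemma prod_one_plus_le_exp s n : (forall i, (i < n)%nat -> 0 <= s i) ->
  prodR (fun i => 1 + s i) n <= exp (sumR s n).
Proof.
  induction n; intros H; simpl; [rewrite exp_0; lra|].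
  rewrite exp_plus. apply Rmult_le_compat.
  - apply prodR_nonneg; intros x Hx; pose proof (H x ltac:(lia)); lra.
  - pose proof (H n ltac:(lia)); lra.
  - apply IHn; intros; apply H; lia.
  - apply exp_ineq1_le.
Qed.

Lemma exp_le_exp x y : x <= y -> exp x <= exp y.
Proof.
  intros [Hlt | ->]; [left; apply exp_increasing; exact Hlt | right; reflexivity].
Qed.

Fixpoint sumL (l : list R) : R := match l with [] => 0 | x :: r => x + sumL r end.

Lemma sumL_app l1 l2 : sumL (l1 ++ l2) = sumL l1 + sumL l2.
Proof. induction l1; simpl; [lra | rewrite IHl1; lra]. Qed.

Lemma sumL_map_mulr {A} (h : A -> R) C l :
  sumL (map (fun x => h x * C) l) = sumL (map h l) * C.
Proof. induction l; simpl; [lra|]. rewrite IHl. lra. Qed.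

Lemma sumL_flat_map {A B} (F : B -> R) (g : A -> list B) l :
  sumL (map F (flat_map g l)) = sumL (map (fun a => sumL (map F (g a))) l).
Proof. induction l; simpl; auto. rewrite map_app, sumL_app, IHl. reflexivity. Qed.

Lemma sumL_map_seq f m k : sumL (map f (seq k m)) = sumR (fun x => f (k + x)%nat) m.
Proof.
  induction m; [reflexivity|].
  cbn [sumR]. rewrite seq_S, map_app, sumL_app, IHm. simpl. lra.
Qed.

Lemma sumR_nth {A} (G : A -> R) (l : list A) d :
  sumR (fun x => G (nth x l d)) (length l) = sumL (map G l).
Proof.
  induction l as [|a l IH] using rev_ind; [reflexivity|].
  rewrite length_app, Nat.add_1_r, map_app, sumL_app. simpl.
  rewrite (sumR_ext _ (fun x => G (nth x l d))) by (intros; rewrite app_nth1 by lia; reflexivity).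
  rewrite IH, nth_middle. lra.
Qed.

Lemma NoDup_flat_map_disjoint {A B} (g : A -> list B) l :
  NoDup l -> (forall a, In a l -> NoDup (g a)) ->
  (forall a a' b, In a l -> In a' l -> In b (g a) -> In b (g a') -> a = a') ->
  NoDup (flat_map g l).
Proof.
  induction l as [|a l IH]; simpl; intros Hl Hg Hdisj; [constructor|].
  inversion Hl; subst. apply NoDup_app; auto.
  - apply IH; auto. intros a0 a' b Ha0 Ha'; apply Hdisj; auto.
  - intros b Hb Hb'. apply in_flat_map in Hb' as [a' [Ha' Hb']].
    assert (a = a') by (apply (Hdisj a a' b); auto). subst. contradiction.
Qed.

Lemma sumL_le_sumR_matching {A} (M : A -> nat -> Prop) (u : A -> R) src :
  forall (v : nat -> R) b,
  NoDup src ->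
  (forall a, In a src -> exists x, M a x) ->
  (forall a a' x, In a src -> In a' src -> M a x -> M a' x -> a = a') ->
  (forall a x, In a src -> M a x -> (x < b)%nat /\ u a <= v x) ->
  (forall x, (x < b)%nat -> 0 <= v x) ->
  sumL (map u src) <= sumR v b.
Proof.
  induction src as [|a r IH]; intros v b Hnd Hex Hinj Hbound Hv; simpl.
  - apply sumR_nonneg; auto.
  - inversion Hnd as [|? ? Har Hnd']; subst.
    destruct (Hex a (or_introl eq_refl)) as [x Hx].
    destruct (Hbound a x (or_introl eq_refl) Hx) as [Hxb Hux].
    rewrite (sumR_split v b x Hxb).
    enough (sumL (map u r) <= sumR (fun y => if Nat.eq_dec y x then 0 else v y) b) by lra.
    apply IH; auto.
    + intros; apply Hex; simpl; auto.
    + intros; apply (Hinj a0 a' x0); simpl; auto.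
    + intros a' y Ha' Hy. destruct (Hbound a' y (or_intror Ha') Hy) as [Hyb Huy].
      split; auto. destruct (Nat.eq_dec y x) as [->|]; auto.
      exfalso. assert (a' = a) as -> by (apply (Hinj a' a x); simpl; auto). contradiction.
    + intros y Hy. destruct (Nat.eq_dec y x); [lra | auto].
Qed.

Lemma psum_sumR g m : psum g m = sumR (fun x => g (S x)) m.
Proof. induction m; simpl; auto. rewrite IHm. reflexivity. Qed.

Lemma psum_seq g m : psum g m = sumL (map g (seq 1 m)).
Proof. rewrite sumL_map_seq, psum_sumR. reflexivity. Qed.

Lemma psum_ext f g m : (forall l, (1 <= l <= m)%nat -> f l = g l) -> psum f m = psum g m.
Proof.
  induction m; simpl; intros H; auto.
  rewrite IHm by (intros; apply H; lia). rewrite H by lia. reflexivity.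
Qed.

Lemma psum_le f g m : (forall l, (1 <= l <= m)%nat -> f l <= g l) -> psum f m <= psum g m.
Proof.
  induction m; simpl; intros H; [lra|].
  pose proof (IHm ltac:(intros; apply H; lia)). pose proof (H (S m) ltac:(lia)). lra.
Qed.

Lemma psum_mono f a m :
  (forall l, (1 <= l)%nat -> 0 <= f l) -> (a <= m)%nat -> psum f a <= psum f m.
Proof.
  intros H. induction m; intros Ha; [replace a with 0%nat by lia; lra|].
  destruct (Nat.eq_dec a (S m)) as [->|]; [lra|]. simpl.
  pose proof (IHm ltac:(lia)). pose proof (H (S m) ltac:(lia)). lra.
Qed.

Lemma psum_zero_tail f a m :
  (a <= m)%nat -> (forall l, (a < l <= m)%nat -> f l = 0) -> psum f m = psum f a.
Proof.
  induction m; intros Ha H; [replace a with 0%nat by lia; reflexivity|].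
  destruct (Nat.eq_dec a (S m)) as [->|]; [reflexivity|]. simpl.
  rewrite IHm by (try intros; try apply H; lia). rewrite H by lia. lra.
Qed.

(** * Threshold indices and spectral masses *)

Lemma first_from_Some P : forall fuel k j, first_from P k fuel = Some j ->
  (k <= j < k + fuel)%nat /\ P j = true /\ forall i, (k <= i < j)%nat -> P i = false.
Proof.
  induction fuel; intros k j H; simpl in H; [discriminate|].
  destruct (P k) eqn:Pk.
  - inversion H; subst. repeat split; auto; lia.
  - apply IHfuel in H as [Hj [HP Hmin]]. repeat split; auto; try lia.
    intros i Hi. destruct (Nat.eq_dec i k) as [->|]; auto. apply Hmin; lia.
Qed.

Lemma first_from_None P : forall fuel k, first_from P k fuel = None ->
  forall i, (k <= i < k + fuel)%nat -> P i = false.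
Proof.
  induction fuel; intros k H i Hi; simpl in H; [lia|].
  destruct (P k) eqn:Pk; [discriminate|].
  destruct (Nat.eq_dec i k) as [->|]; auto. apply (IHfuel (S k)); auto; lia.
Qed.

Lemma jmin_Some g c N j : jmin g c N = Some j ->
  (1 <= j <= N)%nat /\ c < psum g j /\ forall i, (1 <= i < j)%nat -> psum g i <= c.
Proof.
  intros H. apply first_from_Some in H as [Hj [HP Hmin]].
  destruct (Rlt_dec c (psum g j)); [|discriminate].
  repeat split; auto; try lia.
  intros i Hi. specialize (Hmin i Hi). destruct (Rlt_dec c (psum g i)); [discriminate | lra].
Qed.

Lemma jmin_None g c N : jmin g c N = None -> forall i, (1 <= i <= N)%nat -> psum g i <= c.
Proof.
  intros H i Hi. pose proof (first_from_None _ N 1 H i ltac:(lia)) as HP. cbv beta in HP.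
  destruct (Rlt_dec c (psum g i)); [discriminate | lra].
Qed.

Definition sorted_upto (ev : nat -> R) (N : nat) : Prop :=
  forall l l', (1 <= l <= l')%nat -> (l' <= N)%nat -> ev l <= ev l'.

Definition truncate (ev : nat -> R) (lm : R) (g : nat -> R) (l : nat) : R :=
  if Rle_dec (ev l) lm then g l else 0.

Definition mass_below (ev g : nat -> R) (lm : R) (N : nat) : R :=
  psum (truncate ev lm g) N.

Section MassBelow.

Variables (ev g : nat -> R) (N : nat).
Hypothesis ev_sorted : sorted_upto ev N.
Hypothesis g_nonneg : forall l, 0 <= g l.

Lemma truncate_nonneg lm l : 0 <= truncate ev lm g l.
Proof. unfold truncate. destruct Rle_dec; [apply g_nonneg | lra]. Qed.

Lemma mass_below_le_psum lm m : psum (truncate ev lm g) m <= psum g m.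
Proof.
  apply psum_le. intros l _. unfold truncate.
  destruct Rle_dec; [lra | apply g_nonneg].
Qed.

(* The terms with eigenvalue above [lm] form a tail of the sorted enumeration,
   so the partial sums exceed [c] before that tail starts. *)
Lemma jmin_ev_le_of_mass_below c lm :
  0 <= c -> c < mass_below ev g lm N ->
  exists j, jmin g c N = Some j /\ ev j <= lm.
Proof.
  intros Hc Hmass. unfold mass_below in Hmass.
  destruct (jmin g c N) as [j|] eqn:Hj.
  - apply jmin_Some in Hj as [Hj [_ Hmin]]. exists j. split; auto.
    destruct (Rle_dec (ev j) lm) as [|Hgt]; auto. exfalso.
    assert (Htail : psum (truncate ev lm g) N = psum (truncate ev lm g) (j - 1)).
    { apply psum_zero_tail; [lia|]. intros l Hl. unfold truncate.
      destruct (Rle_dec (ev l) lm); auto.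
      assert (ev j <= ev l) by (apply ev_sorted; lia). lra. }
    assert (Hbefore : psum g (j - 1) <= c).
    { destruct (Nat.eq_dec j 1) as [->|]; [simpl; lra | apply Hmin; lia]. }
    pose proof (mass_below_le_psum lm (j - 1)). lra.
  - exfalso. pose proof (mass_below_le_psum lm N).
    destruct N as [|N']; [simpl in Hmass; lra|].
    pose proof (jmin_None g c (S N') Hj (S N') ltac:(lia)). lra.
Qed.

Lemma mass_below_at_jmin c t :
  jmin g c N = Some t -> c < mass_below ev g (ev t) N.
Proof.
  intros Ht. apply jmin_Some in Ht as [Ht [Hc _]].
  assert (Hhead : psum (truncate ev (ev t) g) t = psum g t).
  { apply psum_ext. intros l Hl. unfold truncate.
    destruct Rle_dec as [|Hn]; auto. exfalso. apply Hn, ev_sorted; lia. }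
  pose proof (psum_mono (truncate ev (ev t) g) t N (fun l _ => truncate_nonneg _ l) ltac:(lia)).
  unfold mass_below. lra.
Qed.

End MassBelow.

(** * The product spectrum *)

Definition upd_idx (J : nat -> nat) (k j : nat) : nat -> nat :=
  fun i => if Nat.eq_dec i k then j else J i.

Fixpoint multi_indices (msz : nat -> nat) (k : nat) : list (nat -> nat) :=
  match k with
  | O => [fun _ => 0%nat]
  | S k' => flat_map (fun J => map (upd_idx J k') (seq 0 (msz k'))) (multi_indices msz k')
  end.

Lemma sum_multi_indices_prod msz (w : nat -> nat -> R) k :
  sumL (map (fun J => prodR (fun i => w i (J i)) k) (multi_indices msz k)) =
  prodR (fun i => sumR (w i) (msz i)) k.
Proof.
  induction k; simpl; [lra|].
  rewrite sumL_flat_map.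
  rewrite (map_ext (fun J => sumL (map (fun J => prodR (fun i => w i (J i)) (S k))
                                      (map (upd_idx J k) (seq 0 (msz k)))))
                   (fun J => prodR (fun i => w i (J i)) k * sumR (w k) (msz k))).
  { rewrite sumL_map_mulr, IHk. reflexivity. }
  intros J. rewrite map_map, sumL_map_seq, <- sumR_scal. apply sumR_ext.
  intros j _. simpl. unfold upd_idx at 2. destruct (Nat.eq_dec k k); [|congruence].
  f_equal. apply prodR_ext. intros x Hx. unfold upd_idx. destruct Nat.eq_dec; [lia | reflexivity].
Qed.

Lemma multi_indices_complete msz k J :
  in_Gamma k msz J -> exists J', In J' (multi_indices msz k) /\ same_idx k J' J.
Proof.
  revert J. induction k; intros J HJ.
  - exists (fun _ => 0%nat). split; [left; reflexivity | intros i Hi; lia].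
  - destruct (IHk J) as [J' [HJ' Hsame]]; [intros i Hi; apply HJ; lia|].
    exists (upd_idx J' k (J k)). split.
    + simpl. apply in_flat_map. exists J'. split; auto.
      apply in_map, in_seq. specialize (HJ k ltac:(lia)). lia.
    + intros i Hi. unfold upd_idx. destruct Nat.eq_dec as [->|]; auto. apply Hsame; lia.
Qed.

Definition unit_idx (i j : nat) : nat -> nat :=
  fun k => if Nat.eq_dec k i then j else 0%nat.

Section ProductSpectrum.

Variables (n : nat) (msz : nat -> nat) (p : nat -> R) (lam a : nat -> nat -> R).
Hypothesis msz_pos : forall i, (i < n)%nat -> (1 <= msz i)%nat.
Hypothesis p_nonneg : forall i, (i < n)%nat -> 0 <= p i.
Hypothesis lam0 : forall i, (i < n)%nat -> lam i 0%nat = 0.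
Hypothesis lam_nonneg : forall i j, (i < n)%nat -> (j < msz i)%nat -> 0 <= lam i j.
Hypothesis a0 : forall i, (i < n)%nat -> a i 0%nat = 1.

Let aJ (J : nat -> nat) : R := prodR (fun i => a i (J i)) n.

Lemma lamJ_same_idx J J' : same_idx n J J' -> lamJ n p lam J = lamJ n p lam J'.
Proof. intros H. apply sumR_ext. intros i Hi. rewrite H; auto. Qed.

Lemma aJ_same_idx J J' : same_idx n J J' -> aJ J = aJ J'.
Proof. intros H. apply prodR_ext. intros i Hi. rewrite H; auto. Qed.

Lemma lamJ_ge_coord J i :
  in_Gamma n msz J -> (i < n)%nat -> p i * lam i (J i) <= lamJ n p lam J.
Proof.
  intros HJ Hi. apply (sumR_ge_term (fun i => p i * lam i (J i))); auto.
  intros k Hk. apply Rmult_le_pos; [apply p_nonneg | apply lam_nonneg]; auto.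
Qed.

Lemma unit_idx_in_Gamma i j : (j < msz i)%nat -> in_Gamma n msz (unit_idx i j).
Proof.
  intros Hj k Hk. unfold unit_idx.
  destruct Nat.eq_dec as [->|]; auto.
Qed.

Lemma unit_idx_nonzero i j : (i < n)%nat -> j <> 0%nat -> nonzero_idx n (unit_idx i j).
Proof.
  intros Hi Hj. exists i. split; auto. unfold unit_idx.
  destruct Nat.eq_dec; [auto | congruence].
Qed.

Lemma unit_idx_inj i j i' j' : (i < n)%nat -> j <> 0%nat ->
  same_idx n (unit_idx i j) (unit_idx i' j') -> (i, j) = (i', j').
Proof.
  intros Hi Hj H. specialize (H i Hi). unfold unit_idx in H.
  destruct (Nat.eq_dec i i); [|congruence].
  destruct (Nat.eq_dec i i'); [subst; reflexivity | congruence].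
Qed.

Lemma lamJ_unit_idx i j : (i < n)%nat -> lamJ n p lam (unit_idx i j) = p i * lam i j.
Proof.
  intros Hi. unfold lamJ. rewrite (sumR_single _ n i Hi).
  - unfold unit_idx. destruct Nat.eq_dec; [reflexivity | congruence].
  - intros k Hk Hki. unfold unit_idx. destruct Nat.eq_dec; [congruence|].
    rewrite lam0 by auto. ring.
Qed.

Lemma aJ_unit_idx i j : (i < n)%nat -> aJ (unit_idx i j) = a i j.
Proof.
  intros Hi. unfold aJ. rewrite (prodR_single _ n i Hi).
  - unfold unit_idx. destruct Nat.eq_dec; [reflexivity | congruence].
  - intros k Hk Hki. unfold unit_idx. destruct Nat.eq_dec; [congruence | auto].
Qed.

(* [weight lm i j] is the contribution of the eigenpair [(i, j)] to the level-[lm]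
   mass of chain [i]; the constant eigenvector [j = 0] carries weight [1]. *)
Let weight (lm : R) (i j : nat) : R :=
  if Nat.eq_dec j 0 then 1 else if Rle_dec (p i * lam i j) lm then a i j ^ 2 else 0.

Let chain_mass (lm : R) (i : nat) : R := sumR (fun j => weight lm i (S j)) (msz i - 1).

Lemma weight_nonneg lm i j : 0 <= weight lm i j.
Proof.
  unfold weight. destruct Nat.eq_dec; [lra|]. destruct Rle_dec; [apply pow2_ge_0 | lra].
Qed.

Lemma prod_weight_below lm J : in_Gamma n msz J -> lamJ n p lam J <= lm ->
  prodR (fun i => weight lm i (J i)) n = aJ J ^ 2.
Proof.
  intros HJ Hlm. unfold aJ. rewrite prodR_sq. apply prodR_ext. intros i Hi.
  unfold weight. destruct (Nat.eq_dec (J i) 0) as [->|]; [rewrite a0 by auto; ring|].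
  destruct Rle_dec as [|Hgt]; [reflexivity|].
  exfalso. apply Hgt. pose proof (lamJ_ge_coord J i HJ Hi). lra.
Qed.

Lemma prod_sum_weight lm :
  prodR (fun i => sumR (weight lm i) (msz i)) n = prodR (fun i => 1 + chain_mass lm i) n.
Proof.
  apply prodR_ext. intros i Hi. specialize (msz_pos i Hi).
  replace (msz i) with (S (msz i - 1)) at 1 by lia. rewrite sumR_shift. reflexivity.
Qed.

Variables (N K : nat) (e : nat -> nat -> nat) (f : nat -> nat * nat).
Hypothesis e_enum : enum_prod n msz p lam N e.
Hypothesis f_enum : enum_single n msz p lam K f.

Let varrho (l : nat) : R := lamJ n p lam (e l).
Let psi2 (l : nat) : R := aJ (e l) ^ 2.
Let rho (l : nat) : R := p (fst (f l)) * lam (fst (f l)) (snd (f l)).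
Let varphi2 (l : nat) : R := a (fst (f l)) (snd (f l)) ^ 2.

Lemma single_mass_le_prod_mass lm :
  mass_below rho varphi2 lm K <= mass_below varrho psi2 lm N.
Proof.
  destruct f_enum as [f_range [f_inj [_ _]]].
  destruct e_enum as [_ [_ [e_onto _]]].
  unfold mass_below. rewrite psum_seq, psum_sumR.
  apply (sumL_le_sumR_matching
           (fun l x => (x < N)%nat /\ same_idx n (e (S x)) (unit_idx (fst (f l)) (snd (f l))))).
  - apply seq_NoDup.
  - intros l Hl. apply in_seq in Hl. destruct (f_range l ltac:(lia)) as [Hi Hj].
    destruct (e_onto (unit_idx (fst (f l)) (snd (f l))))
      as [x [Hx Hsame]]; [apply unit_idx_in_Gamma; lia | apply unit_idx_nonzero; lia |].
    exists (x - 1)%nat. replace (S (x - 1)) with x by lia. split; [lia | exact Hsame].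
  - intros l l' x Hl Hl' [_ H1] [_ H2]. apply in_seq in Hl, Hl'.
    destruct (f_range l ltac:(lia)) as [Hi Hj].
    apply f_inj; try lia.
    rewrite (surjective_pairing (f l)), (surjective_pairing (f l')).
    apply unit_idx_inj; [lia | lia |]. intros k Hk. rewrite <- H1, <- H2 by auto. reflexivity.
  - intros l x Hl [Hx Hsame]. apply in_seq in Hl. split; auto.
    destruct (f_range l ltac:(lia)) as [Hi _].
    assert (Hev : varrho (S x) = rho l).
    { unfold varrho. rewrite (lamJ_same_idx _ _ Hsame). apply lamJ_unit_idx; auto. }
    assert (Hw : psi2 (S x) = varphi2 l).
    { unfold psi2. rewrite (aJ_same_idx _ _ Hsame), aJ_unit_idx; auto. }
    unfold truncate. rewrite Hev, Hw. lra.
  - intros x _. apply truncate_nonneg. intros l. apply pow2_ge_0.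
Qed.

Lemma one_plus_prod_mass_le lm :
  1 + mass_below varrho psi2 lm N <= prodR (fun i => sumR (weight lm i) (msz i)) n.
Proof.
  destruct e_enum as [e_range [e_inj _]].
  set (Js := multi_indices msz n). set (d := fun _ : nat => 0%nat).
  set (v := fun x => prodR (fun i => weight lm i (nth x Js d i)) n).
  assert (Hlocate : forall J, in_Gamma n msz J ->
            exists x, (x < length Js)%nat /\ same_idx n (nth x Js d) J).
  { intros J HJ. destruct (multi_indices_complete msz n J HJ) as [J' [HJ' Hsame]].
    destruct (In_nth _ _ d HJ') as [x [Hx Hnth]]. exists x. unfold Js. rewrite Hnth. auto. }
  destruct (Hlocate (fun _ => 0%nat)) as [z [Hz Hzero]].
  { intros i Hi. specialize (msz_pos i Hi). lia. }
  assert (Hvz : v z = 1).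
  { unfold v. rewrite (prodR_ext _ (fun _ => 1)) by (intros i Hi; rewrite Hzero; auto).
    clear. induction n; simpl; lra. }
  rewrite <- sum_multi_indices_prod, <- (sumR_nth _ Js d). fold v.
  rewrite (sumR_split v _ z Hz), Hvz. unfold mass_below. rewrite psum_seq.
  enough (sumL (map (truncate varrho lm psi2) (seq 1 N)) <=
          sumR (fun x => if Nat.eq_dec x z then 0 else v x) (length Js)) by lra.
  apply (sumL_le_sumR_matching
           (fun l x => (x < length Js)%nat /\ same_idx n (nth x Js d) (e l))).
  - apply seq_NoDup.
  - intros l Hl. apply in_seq in Hl. apply Hlocate, e_range. lia.
  - intros l l' x Hl Hl' [_ H1] [_ H2]. apply in_seq in Hl, Hl'.
    apply e_inj; try lia. intros i Hi. rewrite <- H1, <- H2 by auto. reflexivity.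
  - intros l x Hl [Hx Hsame]. apply in_seq in Hl. split; auto.
    destruct (e_range l ltac:(lia)) as [HJ [i [Hi Hnz]]].
    destruct (Nat.eq_dec x z) as [->|].
    { exfalso. apply Hnz. rewrite <- Hsame, Hzero; auto. }
    unfold truncate. destruct Rle_dec as [Hlm|].
    + unfold v. rewrite (prodR_ext _ (fun i => weight lm i (e l i)))
        by (intros k Hk; rewrite Hsame; auto).
      rewrite prod_weight_below by auto. right; reflexivity.
    + apply prodR_nonneg. intros; apply weight_nonneg.
  - intros x _. destruct Nat.eq_dec; [lra|]. apply prodR_nonneg. intros; apply weight_nonneg.
Qed.

Lemma sum_chain_mass_le lm : sumR (chain_mass lm) n <= mass_below rho varphi2 lm K.
Proof.
  destruct f_enum as [_ [_ [f_onto _]]].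
  set (pairs := flat_map (fun i => map (fun j => (i, S j)) (seq 0 (msz i - 1))) (seq 0 n)).
  assert (Hpairs : forall q, In q pairs -> (fst q < n)%nat /\ (1 <= snd q < msz (fst q))%nat).
  { intros q Hq. apply in_flat_map in Hq as [i [Hi Hq]]. apply in_seq in Hi.
    apply in_map_iff in Hq as [j [<- Hj]]. apply in_seq in Hj. simpl. lia. }
  replace (sumR (chain_mass lm) n) with (sumL (map (fun q => weight lm (fst q) (snd q)) pairs)).
  2: { unfold pairs. rewrite sumL_flat_map, sumL_map_seq. apply sumR_ext. intros i _.
       rewrite map_map, sumL_map_seq. reflexivity. }
  unfold mass_below. rewrite psum_sumR.
  apply (sumL_le_sumR_matching (fun q x => (x < K)%nat /\ f (S x) = q)).
  - apply NoDup_flat_map_disjoint; [apply seq_NoDup | |].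
    + intros i _. apply NoDup_map_NoDup_ForallPairs; [|apply seq_NoDup].
      intros j j' _ _ E. injection E. lia.
    + intros i i' q _ _ H1 H2. apply in_map_iff in H1 as [j [<- _]].
      apply in_map_iff in H2 as [j' [E _]]. injection E. auto.
  - intros q Hq. destruct (Hpairs q Hq) as [Hi Hj].
    destruct (f_onto (fst q) (snd q) Hi Hj) as [l [Hl Hfl]].
    exists (l - 1)%nat. replace (S (l - 1)) with l by lia. split; [lia|].
    rewrite Hfl. symmetry. apply surjective_pairing.
  - intros q q' x _ _ [_ <-] [_ <-]. reflexivity.
  - intros q x Hq [Hx <-]. split; auto. destruct (Hpairs _ Hq) as [_ Hj].
    unfold truncate, weight, rho, varphi2.
    destruct Nat.eq_dec; [lia|]. destruct Rle_dec; lra.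
  - intros x _. apply truncate_nonneg. intros l. apply pow2_ge_0.
Qed.

Lemma one_plus_prod_mass_le_exp lm :
  1 + mass_below varrho psi2 lm N <= exp (mass_below rho varphi2 lm K).
Proof.
  pose proof (one_plus_prod_mass_le lm) as Hprod.
  rewrite prod_sum_weight in Hprod.
  pose proof (prod_one_plus_le_exp (chain_mass lm) n
                (fun i _ => sumR_nonneg _ _ (fun j _ => weight_nonneg lm i (S j)))).
  pose proof (exp_le_exp _ _ (sum_chain_mass_le lm)). lra.
Qed.

Lemma eig_prod_le_eig_single c : 0 <= c ->
  le_ext (eig_at varrho (jmin psi2 c N)) (eig_at rho (jmin varphi2 c K)).
Proof.
  intros Hc. destruct (jmin varphi2 c K) as [t|] eqn:Ht; [|destruct (jmin psi2 c N); exact I].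
  pose proof (mass_below_at_jmin rho varphi2 K (proj2 (proj2 (proj2 f_enum)))
                (fun l => pow2_ge_0 _) c t Ht).
  pose proof (single_mass_le_prod_mass (rho t)).
  destruct (jmin_ev_le_of_mass_below varrho psi2 N (proj2 (proj2 (proj2 e_enum)))
              (fun l => pow2_ge_0 _) c (rho t) Hc ltac:(lra)) as [j [-> Hj]].
  exact Hj.
Qed.

Lemma eig_single_le_eig_prod_exp c : 0 <= c ->
  le_ext (eig_at rho (jmin varphi2 c K)) (eig_at varrho (jmin psi2 (exp c - 1) N)).
Proof.
  intros Hc. destruct (jmin psi2 (exp c - 1) N) as [k|] eqn:Hk;
    [|destruct (jmin varphi2 c K); exact I].
  pose proof (mass_below_at_jmin varrho psi2 N (proj2 (proj2 (proj2 e_enum)))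
                (fun l => pow2_ge_0 _) _ k Hk).
  pose proof (one_plus_prod_mass_le_exp (varrho k)).
  assert (Hmass : c < mass_below rho varphi2 (varrho k) K) by (apply exp_lt_inv; lra).
  destruct (jmin_ev_le_of_mass_below rho varphi2 K (proj2 (proj2 (proj2 f_enum)))
              (fun l => pow2_ge_0 _) c (varrho k) Hc Hmass) as [j [-> Hj]].
  exact Hj.
Qed.

End ProductSpectrum.

Lemma eigen_decomp_lam_nonneg m L pi lam phi :
  eigen_decomp m L pi lam phi -> forall j, (j < m)%nat -> 0 <= lam j.
Proof. intros [Hlam0 [Hmono _]] j Hj. rewrite <- Hlam0. apply Hmono; lia. Qed.

Lemma meas_eigen_decomp_phi0 m L pi lam phi mu :
  eigen_decomp m L pi lam phi -> is_distribution m mu -> meas m mu (phi 0%nat) = 1.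
Proof.
  intros [_ [_ [Hphi0 _]]] [_ Hmu]. rewrite <- Hmu. unfold meas.
  apply sumR_ext. intros x Hx. rewrite Hphi0 by auto. ring.
Qed.

Theorem lemmaB1
  (n : nat) (msz : nat -> nat)
  (L : nat -> nat -> nat -> R) (mu pi : nat -> nat -> R) (p : nat -> R)
  (lam : nat -> nat -> R) (phi : nat -> nat -> nat -> R)
  (N : nat) (e : nat -> nat -> nat) (K : nat) (f : nat -> nat * nat) :
  (forall i, (i < n)%nat -> (1 <= msz i)%nat) ->
  (forall i, (i < n)%nat -> is_generator (msz i) (L i)) ->
  (forall i, (i < n)%nat -> irreducible (msz i) (L i)) ->
  (forall i, (i < n)%nat -> is_distribution (msz i) (pi i)) ->
  (forall i, (i < n)%nat -> reversible (msz i) (L i) (pi i)) ->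
  (forall i, (i < n)%nat -> is_distribution (msz i) (mu i)) ->
  (forall i, (i < n)%nat -> 0 < p i) ->
  sumR p n <= 1 ->
  (forall i, (i < n)%nat -> eigen_decomp (msz i) (L i) (pi i) (lam i) (phi i)) ->
  enum_prod n msz p lam N e ->
  enum_single n msz p lam K f ->
  let varrho := fun l => lamJ n p lam (e l) in
  let psi := fun l => muphiJ n msz mu phi (e l) in
  let rho := fun l => p (fst (f l)) * lam (fst (f l)) (snd (f l)) in
  let varphi := fun l => meas (msz (fst (f l))) (mu (fst (f l))) (phi (fst (f l)) (snd (f l))) in
  forall c : R, 0 < c ->
    le_ext (eig_at varrho (jmin (fun l => psi l ^ 2) c N))
           (eig_at rho (jmin (fun l => varphi l ^ 2) c K)) /\
    le_ext (eig_at rho (jmin (fun l => varphi l ^ 2) c K))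
           (eig_at varrho (jmin (fun l => psi l ^ 2) (exp c - 1) N)).
Proof.
  (* Only the spectral data enter. *)
  intros Hmsz _ _ _ _ Hmu Hp _ Heig He Hf varrho psi rho varphi c Hc.
  set (a := fun i j => meas (msz i) (mu i) (phi i j)).
  assert (Hp_nonneg : forall i, (i < n)%nat -> 0 <= p i) by (intros; apply Rlt_le, Hp; auto).
  assert (Hlam0 : forall i, (i < n)%nat -> lam i 0%nat = 0) by (intros i Hi; apply (Heig i Hi)).
  assert (Hlam_nonneg : forall i j, (i < n)%nat -> (j < msz i)%nat -> 0 <= lam i j)
    by (intros i j Hi; apply (eigen_decomp_lam_nonneg _ _ _ _ _ (Heig i Hi))).
  assert (Ha0 : forall i, (i < n)%nat -> a i 0%nat = 1)
    by (intros i Hi; apply (meas_eigen_decomp_phi0 _ _ _ _ _ _ (Heig i Hi) (Hmu i Hi))).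
  split.
  - exact (eig_prod_le_eig_single n msz p lam a Hmsz Hlam0 Ha0
             N K e f He Hf c (Rlt_le _ _ Hc)).
  - exact (eig_single_le_eig_prod_exp n msz p lam a Hmsz Hp_nonneg Hlam_nonneg Ha0
             N K e f He Hf c (Rlt_le _ _ Hc)).
Qed.
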